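(* Let $R$ be a reference string ending with the end-of-string character $\#$, and let ${\cal C}$ be the concatenation of a collection of strings $S_1,\dots,S_m$, each terminated by an end-of-string character, with total length $N$. Let $1\le i,j\le N$. If $\textit{ip}(i)=\textit{ip}(j)$ and neither $i$ nor $j$ is an insert-head, then $\textit{suf}_i$ and $\textit{suf}_j$ are preceded by the same character $c=R[\textit{SA}_R[\textit{ip}(i)]-1]$, i.e. ${\cal C}[i-1]={\cal C}[j-1]=c=R[\textit{SA}_R[\textit{ip}(i)]-1]$.
   Context: Strings are indexed from 1; $T[i..j]$ is a substring, $\textit{suf}_i=T[i..]$. The character $\#$ is smaller than every other character, and smaller than the end-of-string characters of ${\cal C}$ (which are smaller than all other characters of ${\cal C}$). It is assumed every character of ${\cal C}$ occurs in $R$. $\textit{SA}_R$ is the suffix array of $R$: $\textit{SA}_R[k]$ is the starting position of the $k$-th smallest suffix of $R$ in lexicographic order. For a position $i$ of ${\cal C}$, the matching factor $U_i$ is the longest prefix of $\textit{suf}_i({\cal C})$ occurring as a substring of $R$, $\ell_i=|U_i|$, and $c_i={\cal C}[i+\ell_i]$ is the mismatch character. The insert point of $i$ is $\textit{ip}(i)=1$ if $U_i$ is empty; otherwise $\textit{ip}(i)=\max\{k : U_i \text{ is a prefix of } R[\textit{SA}_R[k]..] \text{ and } R[\textit{SA}_R[k]..]<U_ic_i\}$ if this set is nonempty, and $\textit{ip}(i)=\min\{k: U_i\text{ is a prefix of } R[\textit{SA}_R[k]..]\}$ otherwise. A position $j$ of ${\cal C}$ is an insert-head if $\textit{SA}_R[\textit{ip}(j)]\neq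 \textit{SA}_R[\textit{ip}(j-1)]+1$. *)

(* Characters are natural numbers (any finite totally
   ordered alphabet embeds order-preservingly into nat). *)
From mathcomp Require Import all_boot.
Set Implicit Arguments. Unset Strict Implicit. Unset Printing Implicit Defensive.

Fixpoint lexlt (s t : seq nat) : bool :=
  match s, t with
  | _, [::] => false
  | [::], _ :: _ => true
  | x :: s', y :: t' => (x < y) || ((x == y) && lexlt s' t')
  end.
Definition lexle (s t : seq nat) : bool := (s == t) || lexlt s t.

(* 1-based access: T[i] and suf_i = T[i..] *)
Definition ch (T : seq nat) (i : nat) : nat := nth 0 T i.-1.
Definition suf (T : seq nat) (i : nat) : seq nat := drop i.-1 T.

(* concatenation of the strings S_k, each followed by its terminator e_k *)
Definition concat_coll (Ss : seq (seq nat * nat)) : seq nat :=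
  flatten [seq rcons p.1 p.2 | p <- Ss].

(* suffix array of R (1-based, values in 1..|R|): SA R k is the starting
   position of the k-th smallest suffix of R *)
Definition SA_list (R : seq nat) : seq nat :=
  sort (fun p q => lexle (suf R p) (suf R q)) (iota 1 (size R)).
Definition SA (R : seq nat) (k : nat) : nat := nth 0 (SA_list R) k.-1.

Definition mlen (R C : seq nat) (i : nat) : nat :=
  \max_(l < (size (suf C i)).+1 | infix (take l (suf C i)) R) l.
Definition U (R C : seq nat) (i : nat) : seq nat := take (mlen R C i) (suf C i).
(* U_i c_i (if suf_i is entirely matched, this is just U_i) *)
Definition Uc (R C : seq nat) (i : nat) : seq nat := take (mlen R C i).+1 (suf C i).

Definition ip (R C : seq nat) (i : nat) : nat :=
  if mlen R C i == 0 then 1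
  else if [exists k : 'I_(size R).+1,
             [&& 1 <= k, prefix (U R C i) (suf R (SA R k))
                 & lexlt (suf R (SA R k)) (Uc R C i)]]
  then \max_(1 <= k < (size R).+1 | prefix (U R C i) (suf R (SA R k))
                                  && lexlt (suf R (SA R k)) (Uc R C i)) k
  else head 0 [seq k <- iota 1 (size R) | prefix (U R C i) (suf R (SA R k))].

(* insert-head; position 1 (which has no predecessor) is an insert-head by convention *)
Definition insert_head (R C : seq nat) (j : nat) : bool :=
  (j == 1) || (SA R (ip R C j) != (SA R (ip R C j.-1)).+1).

(* A position q that is not an insert-head satisfies SA_R[ip(q)] = SA_R[ip(q-1)] + 1, so
   R[SA_R[ip(q)] - 1] is the first character of the suffix of R at the insert point of q-1.
   That suffix has the matching factor U_{q-1} as a prefix, and U_{q-1} is nonempty because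
   every character of C occurs in R; hence its first character is C[q-1]. *)

From mathcomp Require Import all_boot zify.

Lemma bigmax_attained {I : eqType} {r : seq I} {P : pred I} (F : I -> nat) :
  has P r -> exists2 i, P i & \max_(i <- r | P i) F i = F i.
Proof.
elim: r => //= x r IH; rewrite big_cons.
case Px: (P x) => /=; last exact: IH.
move=> _.
have [/IH[i Pi ->] | nPr] := boolP (has P r).
  by case: (leqP (F x) (F i)); [exists i | exists x].
by rewrite big_hasC // maxn0; exists x.
Qed.

Lemma head_filter_has (T : Type) (x0 : T) (P : pred T) (s : seq T) :
  has P s -> P (head x0 (filter P s)).
Proof. by elim: s => //= x s IH; case Px: (P x) => //= /IH. Qed.

Lemma head_suf (T : seq nat) (i : nat) : head 0 (suf T i) = ch T i.
Proof. by rewrite /ch /suf -nth0 nth_drop addn0. Qed.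

Lemma ch_of_prefix_suf (T : seq nat) (q x : nat) (t : seq nat) :
  prefix (x :: t) (suf T q) -> ch T q = x.
Proof. by rewrite -head_suf; case: (suf T q) => //= y s /andP[/eqP]. Qed.

Lemma prefix_suf_of_infix {T u : seq nat} :
  infix u T -> u != [::] -> exists2 q, q \in iota 1 (size T) & prefix u (suf T q).
Proof.
move=> /infixP[s1 [s2 ->]] u_nil; exists (size s1).+1.
  by rewrite mem_iota !size_cat; case: u u_nil => //= x u _; lia.
by rewrite /suf drop_size_cat // prefix_prefix.
Qed.

Lemma SA_onto {T : seq nat} {q : nat} :
  q \in iota 1 (size T) -> exists2 k, k \in iota 1 (size T) & SA T k = q.
Proof.
rewrite -(mem_sort (fun p q => lexle (suf T p) (suf T q))) -/(SA_list T) => qSA.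
exists (index q (SA_list T)).+1; last by rewrite /SA nth_index.
have := qSA; rewrite -index_mem /SA_list size_sort size_iota mem_iota; lia.
Qed.

Section MatchingFactor.

Variables (R C : seq nat) (p : nat).

Lemma mlen_le_size : mlen R C p <= size (suf C p).
Proof. by apply/bigmax_leqP => l _; rewrite -ltnS. Qed.

Lemma mlen_gt0 : p.-1 < size C -> ch C p \in R -> 0 < mlen R C p.
Proof.
move=> p_lt chR; have s_gt0 : 0 < size (suf C p) by rewrite size_drop subn_gt0.
apply: leq_trans (leq_bigmax_cond (Ordinal (s_gt0 : 1 < _.+1)) _) => //=.
by move: chR; rewrite -head_suf; case: (suf C p) s_gt0 => //= x s; rewrite take0 infix1s.
Qed.

Lemma infix_U : infix (U R C p) R.
Proof.
rewrite /U.
have [l lR ->] : exists2 l : 'I_(size (suf C p)).+1,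
    infix (take l (suf C p)) R & mlen R C p = l.
  by apply: bigmax_attained; apply/hasP; exists ord0; rewrite ?mem_index_enum //= take0 infix0s.
exact: lR.
Qed.

Lemma U_cons : 0 < mlen R C p -> U R C p = ch C p :: behead (U R C p).
Proof.
rewrite /U -head_suf; have := mlen_le_size.
by case: (mlen R C p) => // m; case: (suf C p).
Qed.

Lemma prefix_U_SA_ip : 0 < mlen R C p -> prefix (U R C p) (suf R (SA R (ip R C p))).
Proof.
move=> m_gt0; rewrite /ip (negPf (lt0n_neq0 m_gt0)) /=.
case: ifP => [/existsP[k /and3P[k1 kU kUc]] | _].
  set P := fun k => prefix (U R C p) (suf R (SA R k)) && lexlt (suf R (SA R k)) (Uc R C p).
  have P_has : has P (index_iota 1 (size R).+1).
    by apply/hasP; exists (k : nat); rewrite ?mem_index_iota ?k1 ?ltn_ord // /P kU kUc.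
  by have [m /andP[mU _] ->] := bigmax_attained (fun k => k) P_has.
apply: (@head_filter_has _ 0 (fun k => prefix (U R C p) (suf R (SA R k)))).
have U_neq_nil : U R C p != [::] by rewrite U_cons.
have [q qT qU] := prefix_suf_of_infix infix_U U_neq_nil.
by have [k kT qk] := SA_onto qT; apply/hasP; exists k; rewrite // qk.
Qed.

Lemma ch_SA_ip : 0 < mlen R C p -> ch R (SA R (ip R C p)) = ch C p.
Proof.
by move=> m_gt0; have := prefix_U_SA_ip m_gt0; rewrite U_cons //; apply: ch_of_prefix_suf.
Qed.

End MatchingFactor.

Lemma ch_pred_not_insert_head (R C : seq nat) (q : nat) :
  0 < mlen R C q.-1 -> ~~ insert_head R C q -> ch C q.-1 = ch R (SA R (ip R C q)).-1.
Proof.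
move=> m_gt0; rewrite /insert_head negb_or => /andP[_ /negPn/eqP->].
by rewrite succnK ch_SA_ip.
Qed.

Theorem lemma5 (R0 : seq nat) (hash : nat) (eos : pred nat)
    (Ss : seq (seq nat * nat)) (i j : nat) :
  (* R = R0 # , with # smaller than every other character *)
  (forall x, x \in R0 -> hash < x) ->
  (forall x, x \in concat_coll Ss -> hash < x) ->
  (* each S_k is terminated by an end-of-string character, which does not
     occur inside the strings *)
  (forall p, p \in Ss -> eos p.2 /\ all (fun x => ~~ eos x) p.1) ->
  (* end-of-string characters of C are smaller than all other characters of C *)
  (forall e x, e \in concat_coll Ss -> x \in concat_coll Ss ->
     eos e -> ~~ eos x -> e < x) ->
  (* every character of C occurs in R *)
  (forall x, x \in concat_coll Ss -> x \in rcons R0 hash) ->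
  let R := rcons R0 hash in
  let C := concat_coll Ss in
  let N := size C in
  1 <= i <= N -> 1 <= j <= N ->
  ip R C i = ip R C j ->
  ~~ insert_head R C i -> ~~ insert_head R C j ->
  ch C i.-1 = ch R (SA R (ip R C i)).-1 /\ ch C j.-1 = ch R (SA R (ip R C i)).-1.
Proof.
move=> _ _ _ _ CR R C N i_range j_range ip_ij i_head j_head.
have ch_pred q : 1 <= q <= N -> ~~ insert_head R C q ->
    ch C q.-1 = ch R (SA R (ip R C q)).-1.
  move=> /andP[q1 qN]; apply: ch_pred_not_insert_head.
  have q_lt : q.-1.-1 < size C by rewrite /N in qN; lia.
  by apply: mlen_gt0 => //; apply: CR; rewrite /ch mem_nth.
by split; [exact: ch_pred | rewrite ip_ij; exact: ch_pred].
Qed.
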